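(* Let $C$ be a normalized symmetric conference matrix of order $n\ge 6$, and let \[a=-\frac{2}{n-2}\pm i\,\frac{\sqrt{n(n-4)}}{n-2}.\] Form $C+I_n$ and, in its lower right $(n-1)\times(n-1)$ block, replace every off-diagonal entry $1$ by $a$ and every entry $-1$ by $\overline a$. The resulting matrix is a complex Hadamard matrix of order $n$ whose entries lie in $\{1,a,\overline a\}$.
   Context: A conference matrix of order $n$ is an $n\times n$ matrix $C$ with zero diagonal, off-diagonal entries in $\{1,-1\}$, and $CC^T=(n-1)I_n$; it is normalized if all off-diagonal entries of its first row and first column equal $1$. A complex Hadamard matrix of order $n$ is an $n\times n$ complex matrix with all entries of modulus $1$ satisfying $HH^\ast=nI_n$. *)

(* Field: an arbitrary numClosedFieldType F (e.g. algC),
   playing the role of the complex numbers. *)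
From HB Require Import structures.
From mathcomp Require Import all_boot all_order all_algebra.
Set Implicit Arguments. Unset Strict Implicit. Unset Printing Implicit Defensive.
Import Order.TTheory GRing.Theory Num.Theory.
Local Open Scope ring_scope.

Definition conference_matrix (F : numClosedFieldType) (n : nat) (C : 'M[F]_n) : Prop :=
  [/\ forall i, C i i = 0,
      forall i j, i != j -> C i j = 1 \/ C i j = -1
    & C *m C^T = (n.-1)%:R%:M].

Definition normalized (F : numClosedFieldType) (n : nat) (C : 'M[F]_n) : Prop :=
  forall i j : 'I_n, i != j -> (nat_of_ord i == 0%N) || (nat_of_ord j == 0%N) -> C i j = 1.

Definition symmetric_mx (F : numClosedFieldType) (n : nat) (C : 'M[F]_n) : Prop :=
  C^T = C.

Definition conjT (F : numClosedFieldType) (n : nat) (H : 'M[F]_n) : 'M[F]_n :=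
  (map_mx (@Num.conj F) H)^T.

Definition complex_hadamard (F : numClosedFieldType) (n : nat) (H : 'M[F]_n) : Prop :=
  (forall i j, `|H i j| = 1) /\ H *m conjT H = n%:R%:M.

Definition construct (F : numClosedFieldType) (n : nat) (C : 'M[F]_n) (a : F) : 'M[F]_n :=
  \matrix_(i, j)
    if (nat_of_ord i == 0%N) || (nat_of_ord j == 0%N) || (i == j)
    then (C + 1%:M) i j
    else if (C + 1%:M) i j == 1 then a
    else if (C + 1%:M) i j == -1 then Num.conj a
    else (C + 1%:M) i j.

(* Write a = x + b with x
   real and b purely imaginary, so that a^* = x - b.  Every row i <> 0 of H
   is then x + b C_i corrected at the entries k = 0 and k = i, which we
   write with Kronecker deltas.  Since the rows of C other than the first
   sum to 1 and are pairwise orthogonal, inner products of rows of H reduce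
   to polynomials in x and b: a row i <> 0 sums to (n - 2) x + 2, and two
   distinct rows i, j <> 0 have inner product (n - 3) x^2 + 2 x + 1 + b^2.
   The prescribed a makes both expressions vanish, which also forces
   |a| = 1; hence H H^* = n I. *)

From HB Require Import structures.
From mathcomp Require Import all_boot all_order all_algebra.
From mathcomp Require Import ring.
Set Implicit Arguments.
Unset Strict Implicit.
Unset Printing Implicit Defensive.
Import Order.TTheory GRing.Theory Num.Theory.
Local Open Scope ring_scope.

Lemma oppr1_neq1 (R : numDomainType) : ((-1 : R) == 1) = false.
Proof. exact/lt_eqF/(lt_trans (ltrN10 R))/ltr01. Qed.

Lemma conjT_entry (F : numClosedFieldType) n (M : 'M[F]_n) i j :
  conjT M i j = (M j i)^*.
Proof. by rewrite !mxE. Qed.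

Section DeltaSums.
Variables (R : comPzRingType) (n : nat).
Implicit Types (f g : 'I_n -> R) (i j : 'I_n).

Lemma sum_delta_mul j f : \sum_k (k == j)%:R * f k = f j.
Proof.
rewrite (bigD1 j) //= eqxx mul1r big1 ?addr0 // => k /negbTE->.
by rewrite mul0r.
Qed.

Lemma sum_delta i f p : \sum_k (f k + (k == i)%:R * p) = \sum_k f k + p.
Proof.
by rewrite big_split /= -[p in RHS](sum_delta_mul i (fun=> p)).
Qed.

Lemma dot_delta i j f g p q :
  \sum_k (f k + (k == i)%:R * p) * (g k + (k == j)%:R * q) =
  \sum_k f k * g k + p * g i + f j * q + (i == j)%:R * (p * q).
Proof.
transitivity (\sum_k (f k * g k + (k == i)%:R * (p * g k) + (k == j)%:R * (f k * q)
                      + (k == i)%:R * ((k == j)%:R * (p * q)))).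
  by apply: eq_bigr => k _; ring.
by rewrite !big_split /= !sum_delta_mul.
Qed.

End DeltaSums.

Section ConferenceConstruction.
Variables (F : numClosedFieldType) (m : nat) (C : 'M[F]_m.+1).
Hypotheses (C_conf : conference_matrix C) (C_norm : normalized C).

Lemma conf_diag i : C i i = 0.
Proof. by case: C_conf. Qed.

Lemma conf_offdiag [i j] : i != j -> C i j = 1 \/ C i j = -1.
Proof. by case: C_conf => _ + _; apply. Qed.

Lemma conf_first [k] : k != ord0 -> C ord0 k = 1 /\ C k ord0 = 1.
Proof.
by move=> k0; split; apply: C_norm; rewrite ?eqxx ?orbT // eq_sym.
Qed.

(* Entries of C are 0 or +-1, hence real. *)
Lemma conf_conj i k : (C i k)^* = C i k.
Proof.
have [->|ik] := eqVneq i k; first by rewrite conf_diag rmorph0.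
by case: (conf_offdiag ik) => ->; rewrite ?rmorph1 ?rmorphN1.
Qed.

Lemma conf_row_dot i j : \sum_k C i k * C j k = m%:R *+ (i == j).
Proof.
case: C_conf => _ _ /(congr1 (fun M : 'M[F]_m.+1 => M i j)).
by rewrite !mxE => <-; apply: eq_bigr => k _; rewrite mxE.
Qed.

(* A row other than the first is orthogonal to the all-ones first row,
   so its entries, of which the first is 1, sum to 1. *)
Lemma conf_row_sum i : i != ord0 -> \sum_k C i k = 1.
Proof.
move=> i0; have := conf_row_dot ord0 i; rewrite eq_sym (negbTE i0) mulr0n.
rewrite (bigD1 ord0) //= conf_diag mul0r add0r => dot0.
rewrite (bigD1 ord0) //= (conf_first i0).2 -[RHS]addr0; congr (_ + _).
by apply: etrans dot0; apply: eq_bigr => k k0; rewrite (conf_first k0).1 mul1r.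
Qed.

Lemma construct_entry a i k :
  construct C a i k =
  if (i == ord0) || (k == ord0) || (i == k) then 1
  else if C i k == 1 then a else a^*.
Proof.
rewrite /construct !mxE -[nat_of_ord i == 0%N]/(i == ord0).
rewrite -[nat_of_ord k == 0%N]/(k == ord0).
have [<-|ik] := eqVneq i k; first by rewrite orbT conf_diag add0r.
rewrite /= mulr0n addr0 orbF; case: ifP => [first|_]; first exact: C_norm.
by case: (conf_offdiag ik) => ->; rewrite ?eqxx // oppr1_neq1 eqxx.
Qed.

Lemma construct_values a i k :
  construct C a i k = 1 \/ construct C a i k = a \/ construct C a i k = a^*.
Proof.
rewrite construct_entry; case: ifP => _; first by left.
by case: ifP => _; [right; left | right; right].
Qed.

Hypothesis C_sym : symmetric_mx C.

(* Symmetry is needed only for the inner product of rows i and j, which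
   involves both C i j and C j i. *)
Lemma conf_sym i j : C j i = C i j.
Proof. by rewrite -[in LHS]C_sym mxE. Qed.

Variables x b : F.
Hypotheses (x_real : x^* = x) (b_imag : b^* = - b).

Lemma conj_param : (x + b)^* = x - b.
Proof. by rewrite rmorphD /= x_real b_imag. Qed.

Lemma construct_row i k : i != ord0 ->
  construct C (x + b) i k =
  x + b * C i k + (k == ord0)%:R * (1 - x - b) + (k == i)%:R * (1 - x).
Proof.
move=> i0; rewrite construct_entry (negbTE i0) /=.
have [->|k0] := eqVneq k ord0.
  by rewrite [ord0 == i]eq_sym (negbTE i0) (conf_first i0).2 /=; ring.
have [<-|ik] := eqVneq i k; first by rewrite conf_diag ?eqxx /=; ring.
by case: (conf_offdiag ik) => ->; rewrite ?eqxx ?oppr1_neq1 ?conj_param /=; ring.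
Qed.

Lemma construct_row_conj i k : i != ord0 ->
  (construct C (x + b) i k)^* =
  x - b * C i k + (k == ord0)%:R * (1 - x + b) + (k == i)%:R * (1 - x).
Proof.
move=> i0; rewrite construct_row // !(rmorphD, rmorphN, rmorphM, rmorph_nat, rmorph1) /=.
by rewrite x_real b_imag conf_conj; ring.
Qed.

(* Row sums: x contributes n times, the entries of C sum to 1. *)
Lemma construct_row_sum i : i != ord0 ->
  \sum_k construct C (x + b) i k = (m.+1%:R - 2) * x + 2.
Proof.
move=> i0; under eq_bigr => k _ do rewrite construct_row //.
rewrite !sum_delta big_split /= sumr_const card_ord -mulr_sumr conf_row_sum //.
ring.
Qed.

(* The "bulk" part of two distinct rows: since the rows of C other than the
   first sum to 1 and are orthogonal, only the constant part survives. *)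
Lemma bulk_row_dot i j : i != ord0 -> j != ord0 -> i != j ->
  \sum_k (x + b * C i k) * (x - b * C j k) = m.+1%:R * (x * x).
Proof.
move=> i0 j0 ij.
transitivity (\sum_k (x * x + (b * x) * C i k + (- (x * b)) * C j k
                      + (- (b * b)) * (C i k * C j k))).
  by apply: eq_bigr => k _; ring.
rewrite !big_split /= sumr_const card_ord -!mulr_sumr !conf_row_sum //.
rewrite conf_row_dot (negbTE ij) mulr0n; ring.
Qed.

(* Inner product of two distinct rows other than the first: the bulk term
   n x^2 plus the contributions of the delta corrections at k = 0, i, j. *)
Lemma construct_row_dot i j : i != ord0 -> j != ord0 -> i != j ->
  \sum_k construct C (x + b) i k * (construct C (x + b) j k)^* =
  (m.+1%:R - 3) * (x * x) + 2 * x + 1 + b * b.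
Proof.
move=> i0 j0 ij.
under eq_bigr => k _ do rewrite construct_row // construct_row_conj //.
rewrite dot_delta /= dot_delta /= bulk_row_dot // (negbTE i0) (negbTE j0) (negbTE ij).
rewrite (conf_first i0).2 (conf_first j0).2 (conf_sym i j) /=; ring.
Qed.

(* The two constraints met by the prescribed value of a. *)
Hypotheses (x_lin : (m.+1%:R - 2) * x + 2 = 0)
           (x_quad : (m.+1%:R - 3) * (x * x) + 2 * x + 1 + b * b = 0).

(* The two constraints force |a| = 1, since a a^* = x^2 - b^2. *)
Lemma param_unimodular : `|x + b| = 1.
Proof.
apply/eqP; rewrite -sqrp_eq1 ?normr_ge0 // normCK conj_param.
have -> : (x + b) * (x - b) = x * ((m.+1%:R - 2) * x + 2) + 1
            - ((m.+1%:R - 3) * (x * x) + 2 * x + 1 + b * b) by ring.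
by rewrite x_lin x_quad mulr0 subr0 add0r.
Qed.

Lemma construct_unimodular i k : `|construct C (x + b) i k| = 1.
Proof.
by case: (construct_values (x + b) i k) => [|[|]] ->;
  rewrite ?normr1 ?norm_conjC ?param_unimodular.
Qed.

(* Gram matrix: the diagonal follows from unimodularity, the first row is
   orthogonal to the others by the row sums, and the remaining pairs by
   construct_row_dot. *)
Lemma construct_gram :
  construct C (x + b) *m conjT (construct C (x + b)) = m.+1%:R%:M.
Proof.
apply/matrixP => i j; rewrite [LHS]mxE [RHS]mxE.
under eq_bigr => k _ do rewrite conjT_entry.
have [<-|ij] := eqVneq i j.
  under eq_bigr => k _ do rewrite -normCK construct_unimodular expr1n.
  by rewrite sumr_const card_ord.
have first_row k : construct C (x + b) ord0 k = 1 by rewrite construct_entry eqxx.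
rewrite mulr0n; case: (eqVneq i ord0) ij => [-> | i0] ij.
  under eq_bigr => k _ do rewrite first_row mul1r.
  by rewrite -rmorph_sum /= construct_row_sum 1?eq_sym // x_lin rmorph0.
case: (eqVneq j ord0) ij => [-> | j0] ij.
  under eq_bigr => k _ do rewrite first_row rmorph1 mulr1.
  by rewrite construct_row_sum // x_lin.
by rewrite construct_row_dot.
Qed.

Lemma construct_hadamard : complex_hadamard (construct C (x + b)).
Proof. by split; [exact: construct_unimodular | exact: construct_gram]. Qed.

End ConferenceConstruction.

Lemma param_decomposition (F : numClosedFieldType) (n : nat) (a : F) :
  (4 <= n)%N ->
  (a = - (2%:R / (n%:R - 2%:R)) + 'i * (sqrtC (n%:R * (n%:R - 4%:R)) / (n%:R - 2%:R)) \/
   a = - (2%:R / (n%:R - 2%:R)) - 'i * (sqrtC (n%:R * (n%:R - 4%:R)) / (n%:R - 2%:R))) ->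
  exists x b : F, [/\ a = x + b, x^* = x, b^* = - b,
    (n%:R - 2) * x + 2 = 0 & (n%:R - 3) * (x * x) + 2 * x + 1 + b * b = 0].
Proof.
move=> n4 a_def; set N : F := n%:R.
have N2 : N - 2 != 0.
  by rewrite subr_eq0 /N eqr_nat; apply: contraTneq n4 => ->.
have N4 : 0 <= N - 4 by rewrite subr_ge0 /N ler_nat.
set x := - (2 / (N - 2)); set s := sqrtC (N * (N - 4)); set y := s / (N - 2).
have x_real : x^* = x by rewrite /x rmorphN fmorph_div rmorphB !rmorph_nat.
have y_real : y^* = y.
  apply: conj_Creal; rewrite /y rpred_div ?ger0_real ?sqrtC_ge0 ?mulr_ge0 ?ler0n //.
  by rewrite subr_ge0 /N ler_nat (leq_trans _ n4).
have ss : s * s = N * (N - 4) by rewrite -expr2 sqrtCK.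
have x_lin : (N - 2) * x + 2 = 0 by rewrite /x; field; exact: N2.
have x_quad b : b * b = - (y * y) -> (N - 3) * (x * x) + 2 * x + 1 + b * b = 0.
  move=> ->; rewrite /y -[_ * (s / _)]mulrACA ss /x; field; exact: N2.
have iy_sqr : ('i * y) * ('i * y) = - (y * y) by rewrite mulrACA -expr2 sqrCi mulN1r.
have iy_imag : ('i * y)^* = - ('i * y) by rewrite rmorphM /= conjCi y_real mulNr.
exists x; case: a_def; rewrite -/N -/x -/s -/y => ->.
- by exists ('i * y); split => //; apply: x_quad.
- exists (- ('i * y)); split => //; first by rewrite rmorphN /= iy_imag.
  by apply: x_quad; rewrite mulrNN.
Qed.

Theorem proposition3 (F : numClosedFieldType) (n : nat) (C : 'M[F]_n) (a : F) :
  (6 <= n)%N ->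
  conference_matrix C -> normalized C -> symmetric_mx C ->
  (a = - (2%:R / (n%:R - 2%:R)) + 'i * (sqrtC (n%:R * (n%:R - 4%:R)) / (n%:R - 2%:R)) \/
   a = - (2%:R / (n%:R - 2%:R)) - 'i * (sqrtC (n%:R * (n%:R - 4%:R)) / (n%:R - 2%:R))) ->
  complex_hadamard (construct C a) /\
  (forall i j, construct C a i j = 1 \/ construct C a i j = a \/
               construct C a i j = Num.conj a).
Proof.
case: n C => [//|m] C n6 C_conf C_norm C_sym a_def.
have [x [b [-> x_real b_imag x_lin x_quad]]] :=
  param_decomposition (leq_trans (isT : (4 <= 6)%N) n6) a_def.
split; first exact: construct_hadamard.
exact: construct_values.
Qed.
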